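(* Fix a test policy $\pi$ and initial condition $\xi\in\mathcal X$, and suppose there is $L_\pi\ge0$ with $\|\bar\pi(x)-\bar\pi(y)\|\le L_\pi\|x-y\|$ for all $x,y$ and $\bar\pi\in\{\pi,\pi_\star\}$. Let $f^{cl}_{\pi_\star}$ be $\eta$-locally $\delta$-ISS for some $\eta>0$, and assume its gain $\gamma$ satisfies $\gamma(x)\le O(x^{1+r})$ as $x\to0^+$ for some $r>0$. Choose constants $\mu,\alpha>0$ such that \[2L_\pi x+(x/\mu)^{1/(1+r)}\le\gamma^{-1}(x)\quad\text{for all }0\le x\le\alpha.\] If \[\max_{0\le t\le T-1}\mu\|\Delta_t^{\pi_\star}(\xi;\pi)\|^{1+r}\le\alpha\quad\text{and}\quad\max_{0\le t\le T-1}\Big(2L_\pi\mu\|\Delta_t^{\pi_\star}(\xi;\pi)\|^{1+r}+\|\Delta_t^{\pi_\star}(\xi;\pi)\|\Big)\le\eta,\] then for all $1\le t\le T$, \[\|x_t^{\pi_\star}(\xi)-x_t^\pi(\xi)\|\le\max_{0\le k\le t-1}\mu\|\Delta_k^{\pi_\star}(\xi;\pi)\|^{1+r}.\]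
   Context: Dynamics $x_{t+1}=f(x_t,u_t)$, $x_0=\xi$, $x_t\in\mathbb R^d,u_t\in\mathbb R^m$. For a policy $\pi$, perturbed closed loop $x_{t+1}=f^{cl}_\pi(x_t,\Delta_t):=f(x_t,\pi(x_t)+\Delta_t)$, states $x_t^\pi(\xi,\{\Delta_s\})$, $x_t^\pi(\xi):=x_t^\pi(\xi,\{0\})$. Initial conditions lie in a compact set $\mathcal X$. Norms: Euclidean for vectors, operator norm for matrices/tensors. Class $\mathcal K$: continuous, strictly increasing, vanishing at $0$; class $\mathcal{KL}$: $\beta(\cdot,t)$ class $\mathcal K$ for each $t$, $\beta(s,\cdot)$ decreasing. $f^{cl}_\pi$ is $\eta$-locally $\delta$-ISS if there are class $\mathcal{KL}$ $\beta$ and class $\mathcal K$ $\gamma$ with $\|x_t^\pi(\xi_1;\{\Delta_s\}_{s=0}^{t-1})-x_t^\pi(\xi_2;\{0\})\|\le\beta(\|\xi_1-\xi_2\|,t)+\gamma(\max_{0\le k\le t-1}\|\Delta_k\|)$ for all $\xi_1,\xi_2\in\mathcal X$, $t\in\mathbb N$, and perturbations with $\sup_t\|\Delta_t\|\le\eta$. $\gamma^{-1}$ is the inverse of $\gamma$ on its range (with $\gamma^{-1}(x)=+\infty$ for $x\ge\sup\gamma$). $\pi_\star$ is the expert policy; the discrepancy on the expert trajectory is $\Delta_t^{\pi_\star}(\xi;\pi):=\pi(x_t^{\pi_\star}(\xi))-\pi_\star(x_t^{\pi_\star}(\xi))$. *)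

From HB Require Import structures.
From mathcomp Require Import all_boot all_order all_algebra.
From mathcomp Require Import all_classical all_reals all_analysis.
Set Implicit Arguments. Unset Strict Implicit. Unset Printing Implicit Defensive.
Import Order.TTheory GRing.Theory Num.Theory.
Import numFieldNormedType.Exports.
Local Open Scope classical_set_scope.
Local Open Scope ring_scope.

Section Defs.
Variable R : realType.

Definition enorm (n : nat) (v : 'cV[R]_n) : R :=
  Num.sqrt (\sum_(i < n) (v i 0) ^+ 2).

Fixpoint traj (d m : nat) (f : 'cV[R]_d -> 'cV[R]_m -> 'cV[R]_d)
  (pi : 'cV[R]_d -> 'cV[R]_m) (xi : 'cV[R]_d) (Delta : nat -> 'cV[R]_m)
  (t : nat) : 'cV[R]_d :=
  match t with
  | O => xi
  | S t' => let x := traj f pi xi Delta t' in f x (pi x + Delta t')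
  end.

Definition traj0 (d m : nat) (f : 'cV[R]_d -> 'cV[R]_m -> 'cV[R]_d)
  (pi : 'cV[R]_d -> 'cV[R]_m) (xi : 'cV[R]_d) (t : nat) : 'cV[R]_d :=
  traj f pi xi (fun _ => 0) t.

Definition classK (g : R -> R) : Prop :=
  {within [set x : R | 0 <= x], continuous g} /\
  (forall x y, 0 <= x -> x < y -> g x < g y) /\
  g 0 = 0.

Definition classKL (b : R -> nat -> R) : Prop :=
  (forall t, classK (fun s => b s t)) /\
  (forall s, 0 <= s -> forall t1 t2 : nat, (t1 <= t2)%N -> b s t2 <= b s t1).

Definition locally_dISS_with (d m : nat) (f : 'cV[R]_d -> 'cV[R]_m -> 'cV[R]_d)
  (pi : 'cV[R]_d -> 'cV[R]_m) (X : set 'cV[R]_d) (eta : R)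
  (beta : R -> nat -> R) (gamma : R -> R) : Prop :=
  classKL beta /\ classK gamma /\
  forall xi1 xi2, X xi1 -> X xi2 ->
  forall Delta : nat -> 'cV[R]_m, (forall s, enorm (Delta s) <= eta) ->
  forall t : nat,
    enorm (traj f pi xi1 Delta t - traj0 f pi xi2 t)
      <= beta (enorm (xi1 - xi2)) t
         + gamma (\big[Num.max/0]_(k < t) enorm (Delta k)).

Definition locally_dISS (d m : nat) (f : 'cV[R]_d -> 'cV[R]_m -> 'cV[R]_d)
  (pi : 'cV[R]_d -> 'cV[R]_m) (X : set 'cV[R]_d) (eta : R) : Prop :=
  exists beta gamma, locally_dISS_with f pi X eta beta gamma.

(* Inverse of gamma on its range (over [0,+oo)), +oo outside the range. *)
Definition ginv (g : R -> R) (x : R) : \bar R :=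
  match pselect (exists y : R, 0 <= y /\ g y = x) with
  | left H => (proj1_sig (cid H))%:E
  | right _ => +oo%E
  end.

Definition discr (d m : nat) (f : 'cV[R]_d -> 'cV[R]_m -> 'cV[R]_d)
  (pistar pi : 'cV[R]_d -> 'cV[R]_m) (xi : 'cV[R]_d) (t : nat) : 'cV[R]_m :=
  pi (traj0 f pistar xi t) - pistar (traj0 f pistar xi t).

End Defs.

(** The learner trajectory is the expert closed loop driven by the perturbation
    [Delta_s = pi(x_s^pi) - pi_star(x_s^pi)], so delta-ISS of the expert loop
    started twice at [xi] bounds the error at time [t] by [gamma] of the largest
    such perturbation before [t].  By Lipschitz continuity of both policies this
    perturbation is at most [2 L e_s + |Delta_s^{pi_star}|], where [e_s] is the
    error at time [s]; by strong induction [e_s <= M_s], the running maximum of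
    [mu |Delta^{pi_star}|^{1+r}].  Both terms are then bounded in terms of [M_t],
    and the choice of [mu] and [alpha] makes the resulting bound at most
    [gamma^{-1}(M_t)], whence the error at [t] is at most [M_t]. *)
From HB Require Import structures.
From mathcomp Require Import all_boot all_order all_algebra.
From mathcomp Require Import all_classical all_reals all_analysis.
From mathcomp Require Import ring lra.
Import Order.TTheory GRing.Theory Num.Theory.
Import numFieldNormedType.Exports.
Local Open Scope classical_set_scope.
Local Open Scope ring_scope.

Section EuclideanNorm.
Context {R : realType} {n : nat}.

(* Lagrange's identity: the double sum of the squares [(a_i b_j - a_j b_i)^2]
   is twice the difference of the two sides. *)
Lemma sum_mul_sqr_le (a b : 'I_n -> R) :
  (\sum_i a i * b i) ^+ 2 <= (\sum_i a i ^+ 2) * (\sum_i b i ^+ 2).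
Proof.
have lagrange_ge0 : 0 <= \sum_i \sum_j (a i * b j - a j * b i) ^+ 2.
  by apply: sumr_ge0 => i _; apply: sumr_ge0 => j _; exact: sqr_ge0.
have lagrangeE : \sum_i \sum_j (a i * b j - a j * b i) ^+ 2 =
    2 * ((\sum_i a i ^+ 2) * (\sum_i b i ^+ 2)) - 2 * (\sum_i a i * b i) ^+ 2.
  transitivity (\sum_i (a i ^+ 2 * (\sum_j b j ^+ 2) + (\sum_j a j ^+ 2) * b i ^+ 2
      - 2 * (a i * b i) * (\sum_j a j * b j))).
    apply: eq_bigr => i _.
    rewrite mulr_sumr mulr_suml mulr_sumr -big_split -sumrB /=.
    by apply: eq_bigr => j _; ring.
  by rewrite sumrB big_split /= -mulr_suml -mulr_sumr -mulr_suml -mulr_sumr; ring.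
lra.
Qed.

Lemma enorm_ge0 (v : 'cV[R]_n) : 0 <= enorm v.
Proof. exact: sqrtr_ge0. Qed.

Lemma enorm0 : enorm (0 : 'cV[R]_n) = 0.
Proof. by rewrite /enorm big1 ?sqrtr0 // => i _; rewrite mxE expr0n. Qed.

Lemma enormN (v : 'cV[R]_n) : enorm (- v) = enorm v.
Proof.
by rewrite /enorm; congr Num.sqrt; apply: eq_bigr => i _; rewrite mxE sqrrN.
Qed.

Lemma enormD (u v : 'cV[R]_n) : enorm (u + v) <= enorm u + enorm v.
Proof.
rewrite /enorm; set Su := \sum_i u i 0 ^+ 2; set Sv := \sum_i v i 0 ^+ 2.
have Su_ge0 : 0 <= Su by apply: sumr_ge0 => i _; exact: sqr_ge0.
have Sv_ge0 : 0 <= Sv by apply: sumr_ge0 => i _; exact: sqr_ge0.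
have sqrE : \sum_i (u + v) i 0 ^+ 2 = Su + Sv + 2 * (\sum_i u i 0 * v i 0).
  rewrite /Su /Sv mulr_sumr -!big_split /=.
  by apply: eq_bigr => i _; rewrite mxE; ring.
have dot_le : \sum_i u i 0 * v i 0 <= Num.sqrt Su * Num.sqrt Sv.
  rewrite -sqrtrM // (le_trans (ler_norm _)) // -sqrtr_sqr ler_sqrt ?mulr_ge0 //.
  exact: sum_mul_sqr_le.
rewrite sqrE -[X in _ <= X]ger0_norm ?addr_ge0 ?sqrtr_ge0 //.
by rewrite -sqrtr_sqr ler_sqrt ?sqr_ge0 // sqrrD !sqr_sqrtr //; lra.
Qed.

Lemma enormB_sym (u v : 'cV[R]_n) : enorm (u - v) = enorm (v - u).
Proof. by rewrite -enormN opprB. Qed.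

End EuclideanNorm.

Section RealFacts.
Context {R : realType}.

Lemma le_root_mul_powR (mu p a M : R) : 0 < mu -> 0 < p -> 0 <= a ->
  mu * a `^ p <= M -> a <= (M / mu) `^ (1 / p).
Proof.
move=> mu_gt0 p_gt0 a_ge0 le_M.
have -> : a = (mu * a `^ p / mu) `^ (1 / p).
  by rewrite [mu * _]mulrC mulfK ?gt_eqF // -powRrM mul1r mulfV ?gt_eqF ?powRr1.
have M_ge0 : 0 <= M.
  by rewrite (le_trans _ le_M) // mulr_ge0 ?powR_ge0 ?(ltW mu_gt0).
apply: ge0_ler_powR;
  rewrite ?nnegrE ?divr_ge0 ?mulr_ge0 ?powR_ge0 ?(ltW mu_gt0) ?(ltW p_gt0) //.
by rewrite ler_pM2r ?invr_gt0.
Qed.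

(* Either [y] is attained by [g], and then monotonicity applies, or [y] exceeds
   the range of [g] on [[0, +oo)]: then [g z <= y], since otherwise the
   intermediate value theorem on [[0, z]] would attain [y]. *)
Lemma classK_le_ginv (g : R -> R) (y z : R) : classK g -> 0 <= y -> 0 <= z ->
  (z%:E <= ginv g y)%E -> g z <= y.
Proof.
move=> [g_cont [g_incr g0]] y_ge0 z_ge0; rewrite /ginv.
case: pselect => [y_range|y_not_range _].
  case: (cid y_range) => w [w_ge0 gwE] /=; rewrite -gwE lee_fin le_eqVlt.
  by case/orP=> [/eqP -> // | /(g_incr _ _ z_ge0)/ltW].
rewrite leNgt; apply/negP => y_lt_gz; apply: y_not_range.
have [c c_in gcE] : exists2 c : R, c \in `[0, z] & g c = y.
  apply: IVT => //.
    apply: continuous_subspaceW g_cont => x.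
    by rewrite /= in_itv /= => /andP[].
  have g0_le : g 0 <= g z by rewrite g0 (le_trans y_ge0) ?(ltW y_lt_gz).
  by rewrite min_l ?max_r // g0 y_ge0 ltW.
by exists c; move: c_in; rewrite in_itv /= => /andP[].
Qed.

(* The maximum is attained at some [j < k]: if [a j <= a k] the bound at [k]
   applies, otherwise the bound at [j] does. *)
Lemma scaled_bigmax_add_le (K e : R) (w a : nat -> R) (k : nat) :
  0 <= K -> (forall j, 0 <= w j) -> (forall i j, a i <= a j -> w i <= w j) ->
  (forall j, (j <= k)%N -> K * w j + a j <= e) ->
  K * \big[Num.max/0]_(j < k) w j + a k <= e.
Proof.
move=> K_ge0 w_ge0 w_mono le_e.
case: k le_e => [|k] le_e.
  rewrite big_ord0 mulr0 add0r (le_trans _ (le_e 0%N isT)) //.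
  by rewrite lerDr mulr_ge0.
have [j _ ->] := eq_bigmax (x := 0) (ord0 : 'I_k.+1) predT (fun j => w j) isT
  (fun j _ => w_ge0 j).
have j_le : (j <= k.+1)%N by exact: ltnW.
case: (leP (a j) (a k.+1)) => [a_le | a_gt].
  by apply: le_trans (le_e _ (leqnn _)); rewrite lerD2r ler_wpM2l // w_mono.
by apply: le_trans (le_e _ j_le); rewrite lerD2l ltW.
Qed.

End RealFacts.

Section ClosedLoop.
Context {R : realType} {d m : nat} {f : 'cV[R]_d -> 'cV[R]_m -> 'cV[R]_d}.
Context {pistar pi : 'cV[R]_d -> 'cV[R]_m}.

Lemma policy_gap_lipschitz_le (L : R) (x y : 'cV[R]_d) :
  (forall x y, enorm (pi x - pi y) <= L * enorm (x - y)) ->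
  (forall x y, enorm (pistar x - pistar y) <= L * enorm (x - y)) ->
  enorm (pi y - pistar y) <= 2 * L * enorm (x - y) + enorm (pi x - pistar x).
Proof.
move=> pi_lip pistar_lip.
have -> : pi y - pistar y =
    (pi y - pi x) + (pi x - pistar x) + (pistar x - pistar y).
  by rewrite !addrA !subrK.
have := pi_lip y x; have := pistar_lip x y; rewrite (enormB_sym y) => le1 le2.
have := enormD (pi y - pi x + (pi x - pistar x)) (pistar x - pistar y).
have := enormD (pi y - pi x) (pi x - pistar x).
lra.
Qed.

Lemma traj_learner_discr (xi : 'cV[R]_d) (Delta : nat -> 'cV[R]_m) (t : nat) :
  (forall s, (s < t)%N ->
     Delta s = pi (traj0 f pi xi s) - pistar (traj0 f pi xi s)) ->
  traj f pistar xi Delta t = traj0 f pi xi t.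
Proof.
elim: t => [|t IHt] DeltaE //=.
rewrite IHt => [|s lt_st]; last exact/DeltaE/ltnW.
by rewrite DeltaE // addrC subrK /traj0 /= addr0.
Qed.

(* The perturbation is truncated after time [t] only to keep it within the
   ISS radius [eta] at all times. *)
Lemma dISS_learner_gap_le {X : set 'cV[R]_d} {eta : R} {beta gamma} {xi t} :
  locally_dISS_with f pistar X eta beta gamma -> X xi -> 0 <= eta ->
  (forall k, (k < t)%N ->
     enorm (pi (traj0 f pi xi k) - pistar (traj0 f pi xi k)) <= eta) ->
  enorm (traj0 f pistar xi t - traj0 f pi xi t) <=
    gamma (\big[Num.max/0]_(k < t)
             enorm (pi (traj0 f pi xi k) - pistar (traj0 f pi xi k))).
Proof.
move=> [[beta_K _] [_ iss]] Xxi eta_ge0 le_eta.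
pose Delta s := if (s < t)%N
  then pi (traj0 f pi xi s) - pistar (traj0 f pi xi s) else 0.
have Delta_le s : enorm (Delta s) <= eta.
  by rewrite /Delta; case: ifP => [/le_eta|_]; rewrite ?enorm0.
have := iss xi xi Xxi Xxi Delta Delta_le t.
rewrite traj_learner_discr => [|s lt_st]; last by rewrite /Delta lt_st.
rewrite subrr enorm0; have [_ [_ ->]] := beta_K t; rewrite add0r enormB_sym.
by under eq_bigr => k _ do rewrite /Delta ltn_ord.
Qed.

End ClosedLoop.

Section ImitationGap.
Context {R : realType} {d m : nat}.
Context {f : 'cV[R]_d -> 'cV[R]_m -> 'cV[R]_d} {pistar pi : 'cV[R]_d -> 'cV[R]_m}.
Context {X : set 'cV[R]_d} {xi : 'cV[R]_d} {Lpi eta r mu alpha : R}.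
Context {beta : R -> nat -> R} {gamma : R -> R} {T : nat}.
Hypotheses (Xxi : X xi) (Lpi_ge0 : 0 <= Lpi) (eta_gt0 : 0 < eta).
Hypotheses (r_gt0 : 0 < r) (mu_gt0 : 0 < mu).
Hypothesis pi_lip : forall x y, enorm (pi x - pi y) <= Lpi * enorm (x - y).
Hypothesis pistar_lip :
  forall x y, enorm (pistar x - pistar y) <= Lpi * enorm (x - y).
Hypothesis iss : locally_dISS_with f pistar X eta beta gamma.
Hypothesis gamma_inv_ge : forall x, 0 <= x -> x <= alpha ->
  ((2 * Lpi * x + (x / mu) `^ (1 / (1 + r)))%:E <= ginv gamma x)%E.
Hypothesis bigmax_le_alpha :
  \big[Num.max/0]_(t < T) (mu * enorm (discr f pistar pi xi t) `^ (1 + r))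
    <= alpha.
Hypothesis bigmax_le_eta :
  \big[Num.max/0]_(t < T) (2 * Lpi * mu * enorm (discr f pistar pi xi t) `^ (1 + r)
                           + enorm (discr f pistar pi xi t)) <= eta.

Local Notation xs := (traj0 f pistar xi).
Local Notation xp := (traj0 f pi xi).
Local Notation a k := (enorm (discr f pistar pi xi k)).
Local Notation w k := (mu * a k `^ (1 + r)).
Local Notation M t := (\big[Num.max/0]_(k < t) w k).
Local Notation learner_discr k := (enorm (pi (xp k) - pistar (xp k))).

Lemma w_ge0 k : 0 <= w k.
Proof. by rewrite mulr_ge0 ?powR_ge0 ?(ltW mu_gt0). Qed.

Section Induction.
Context {t : nat}.
Hypothesis gap_le : forall k, (k < t)%N -> enorm (xs k - xp k) <= M k.

Lemma learner_discr_le {k} : (k < t)%N -> learner_discr k <= 2 * Lpi * M k + a k.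
Proof.
move=> lt_kt.
apply: le_trans (policy_gap_lipschitz_le Lpi (xs k) (xp k) pi_lip pistar_lip) _.
by rewrite lerD2r ler_wpM2l ?mulr_ge0 ?gap_le.
Qed.

Lemma learner_discr_le_eta : (t <= T)%N ->
  forall k, (k < t)%N -> learner_discr k <= eta.
Proof.
move=> le_tT k lt_kt; apply: le_trans (learner_discr_le lt_kt) _.
apply: (scaled_bigmax_add_le _ _ (fun j => w j) (fun j => a j))
  => [||i j le_ij|j le_jk].
- by rewrite mulr_ge0.
- exact: w_ge0.
- rewrite ler_wpM2l ?(ltW mu_gt0) //.
  by apply: ge0_ler_powR; rewrite ?nnegrE ?enorm_ge0 ?addr_ge0 ?(ltW r_gt0).
- have lt_jT : (j < T)%N by rewrite (leq_ltn_trans le_jk) ?(leq_trans lt_kt).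
  apply: le_trans bigmax_le_eta; rewrite mulrA.
  exact: (le_bigmax _ (fun i : 'I_T => 2 * Lpi * mu * a i `^ (1 + r) + a i)
                    (Ordinal lt_jT)).
Qed.

Lemma learner_discr_bigmax_le :
  \big[Num.max/0]_(k < t) learner_discr k
    <= 2 * Lpi * M t + (M t / mu) `^ (1 / (1 + r)).
Proof.
have M_ge0 : 0 <= M t by exact: bigmax_ge_id.
apply: bigmax_le => [|k _]; first by rewrite addr_ge0 ?powR_ge0 ?mulr_ge0.
apply: le_trans (learner_discr_le (ltn_ord k)) _; apply: lerD.
  rewrite ler_wpM2l ?mulr_ge0 //.
  exact: (le_bigmax_ord xpredT (fun i => w i) (ltnW (ltn_ord k))).
apply: le_root_mul_powR; rewrite ?addr_gt0 ?enorm_ge0 //.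
exact: (le_bigmax _ (fun i : 'I_t => w i) k).
Qed.

End Induction.

Lemma expert_learner_gap_le t : (t <= T)%N -> enorm (xs t - xp t) <= M t.
Proof.
elim/ltn_ind: t => t IH le_tT.
have gap_le k : (k < t)%N -> enorm (xs k - xp k) <= M k.
  by move=> lt_kt; rewrite IH ?(leq_trans (ltnW lt_kt)).
have M_ge0 : 0 <= M t by exact: bigmax_ge_id.
have M_le_alpha : M t <= alpha.
  exact: le_trans (le_bigmax_ord xpredT (fun k => w k) le_tT) bigmax_le_alpha.
apply: le_trans (dISS_learner_gap_le iss Xxi (ltW eta_gt0)
  (learner_discr_le_eta gap_le le_tT)) _.
apply: classK_le_ginv; rewrite ?bigmax_ge_id //; first by case: iss => _ [].
apply: le_trans _ (gamma_inv_ge _ M_ge0 M_le_alpha).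
by rewrite lee_fin; exact: learner_discr_bigmax_le.
Qed.

End ImitationGap.

Theorem theorem1 (R : realType) (d m : nat)
  (f : 'cV[R]_d -> 'cV[R]_m -> 'cV[R]_d)
  (pistar pi : 'cV[R]_d -> 'cV[R]_m)
  (X : set 'cV[R]_d) (hX : compact X)
  (xi : 'cV[R]_d) (hxi : X xi)
  (Lpi : R) (hL0 : 0 <= Lpi)
  (hLpi : forall x y, enorm (pi x - pi y) <= Lpi * enorm (x - y))
  (hLstar : forall x y, enorm (pistar x - pistar y) <= Lpi * enorm (x - y))
  (eta : R) (heta : 0 < eta)
  (beta : R -> nat -> R) (gamma : R -> R)
  (hISS : locally_dISS_with f pistar X eta beta gamma)
  (r : R) (hr : 0 < r)
  (hgO : exists C : R, exists c : R, 0 < c /\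
           forall x, 0 < x -> x < c -> gamma x <= C * x `^ (1 + r))
  (mu alpha : R) (hmu : 0 < mu) (halpha : 0 < alpha)
  (hma : forall x, 0 <= x -> x <= alpha ->
     ((2 * Lpi * x + (x / mu) `^ (1 / (1 + r)))%:E <= ginv gamma x)%E)
  (T : nat)
  (h1 : \big[Num.max/0]_(t < T)
          (mu * enorm (discr f pistar pi xi t) `^ (1 + r)) <= alpha)
  (h2 : \big[Num.max/0]_(t < T)
          (2 * Lpi * mu * enorm (discr f pistar pi xi t) `^ (1 + r)
           + enorm (discr f pistar pi xi t)) <= eta) :
  forall t : nat, (1 <= t <= T)%N ->
    enorm (traj0 f pistar xi t - traj0 f pi xi t)
      <= \big[Num.max/0]_(k < t)
           (mu * enorm (discr f pistar pi xi k) `^ (1 + r)).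
Proof.
move=> t /andP[_ le_tT].
exact: (expert_learner_gap_le hxi hL0 heta hr hmu hLpi hLstar hISS hma h1 h2).
Qed.
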